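(* Let $G$ be a graph and let $K$ be a cut-set of the complement $\overline{G}$. Then for every induced subgraph $H$ of $G$, \[\chi(G) \leq \frac{1}{2} \left(\omega(G) + \Delta(G) + 1 \right) + \frac{4\chi(G[K]) + 3\chi(H \smallsetminus K) - |H \smallsetminus K|}{4}.\]
   Context: All graphs are finite and simple with non-empty vertex set. $|G|$ denotes the number of vertices, $\chi$ the chromatic number, $\omega$ the clique number, $\Delta$ the maximum degree. $\overline{G}$ is the complement of $G$. A cut-set of $\overline{G}$ is a set $K$ of vertices such that $\overline{G} - K$ is disconnected. $G[K]$ is the subgraph of $G$ induced by $K$, and $H \smallsetminus K$ is the subgraph of $G$ induced by $V(H)\setminus K$. By convention a graph on the empty vertex set has chromatic number $0$ and $0$ vertices. *)

(* A simple graph on a finite vertex type T is a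
   symmetric irreflexive boolean relation e : rel T (vertex set = T). *)
From mathcomp Require Import all_boot all_order.
Set Implicit Arguments. Unset Strict Implicit. Unset Printing Implicit Defensive.

Section Graphs.
Variables (T : finType) (e : rel T).

Definition simple_graph : Prop := [/\ symmetric e, irreflexive e & 0 < #|T|].

(* c is a proper colouring of the induced subgraph G[A] with colours in {0..k-1}
   (the test x != y is redundant for an irreflexive e) *)
Definition proper_coloring (A : {set T}) (k : nat) (c : T -> nat) : bool :=
  [forall x in A, (c x < k) &&
     [forall y in A, ((x != y) && e x y) ==> (c x != c y)]].

Definition colorable (A : {set T}) (k : nat) : bool :=
  [exists c : {ffun T -> 'I_k.+1}, proper_coloring A k (fun x => nat_of_ord (c x))].

Lemma colorable_ex (A : {set T}) : exists k, colorable A k.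
Proof.
exists #|T|; apply/existsP.
have H (x : T) : (enum_rank x : nat) < #|T|.+1 := leqW (ltn_ord (enum_rank x)).
exists [ffun x => inord (enum_rank x) : 'I_#|T|.+1].
apply/forallP => x; apply/implyP => _; rewrite ffunE inordK //= ltn_ord /=.
apply/forallP => y; apply/implyP => _; apply/implyP => /andP [nxy _].
rewrite ffunE inordK //; apply/negP => /eqP /val_inj /enum_rank_inj eq_xy.
by rewrite eq_xy eqxx in nxy.
Qed.

(* chromatic number of the induced subgraph G[A]; equals 0 when A is empty *)
Definition chi (A : {set T}) : nat := ex_minn (colorable_ex A).

Definition clique (S : {set T}) : bool :=
  [forall x in S, forall y in S, (x != y) ==> e x y].

Definition omega : nat := \max_(S : {set T} | clique S) #|S|.

Definition Delta : nat := \max_(x : T) #|[set y | e x y]|.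

Definition compl_rel : rel T := fun x y => (x != y) && ~~ e x y.

(* K is a cut-set of the complement of G: complement(G) - K is disconnected,
   i.e. it has two vertices joined by no path inside V \ K *)
Definition compl_cutset (K : {set T}) : Prop :=
  let r := fun x y => [&& x \notin K, y \notin K & compl_rel x y] in
  exists u v, [/\ u \notin K, v \notin K & ~~ connect r u v].

End Graphs.

(* The vertices outside K split, along the components of the complement, into
   two parts A and B such that every vertex of A is adjacent to every vertex of
   B.  Hence chi(G) <= chi(K) + chi(A) + chi(B), omega(A) + omega(B) <= omega(G),
   |B| + Delta(A) <= Delta(G), |A| + Delta(B) <= Delta(G) and
   chi(H n A) + chi(H n B) <= chi(H \ K), and the theorem is the sum of the
   inequality
        4 chi(X) + |Y| <= 2 omega(X) + |X| + Delta(X) + 1 + 3 chi(Y)   (Y <= X)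
   for (A, H n A) and (B, H n B).  This inequality is proved by induction on |X|:
   deleting a maximal stable set I costs one color and lowers Delta(X), and the
   loss is paid either by the top color class of Y, contained in I, or by three
   vertices of I.  If X has no stable set of size 3, fix an optimal coloring:
   its classes have at most two vertices, so 2 chi(X) <= |X| + |U| where U is
   the set of vertices alone in their class, and U is a clique.  For u in U,
   split the non-neighbors of u into the loose ones, which have a non-neighbor
   in U - u, and the others.  Recoloring arguments show that U together with
   the color-class partners of the loose ones and of one other is a clique, as
   is U - u together with the non-loose ones; whence
   2|U| + |X| <= 2 omega(X) + Delta(X) + 1. *)

From mathcomp Require Import all_boot all_order all_algebra.
From mathcomp Require Import zify lra.
Set Implicit Arguments. Unset Strict Implicit. Unset Printing Implicit Defensive.

Section Colorings.
Variables (T : finType) (e : rel T).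
Hypothesis e_irr : irreflexive e.

Definition proper_in (aT : eqType) (X : {set T}) (c : T -> aT) :=
  forall x y, x \in X -> y \in X -> e x y -> c x != c y.

Definition complete (A B : {set T}) := forall a b, a \in A -> b \in B -> e a b.

Definition stable (S : {set T}) := [forall x in S, forall y in S, ~~ e x y].

Lemma proper_in_nonadj (aT : eqType) (X : {set T}) (c : T -> aT) x y :
  proper_in X c -> x \in X -> y \in X -> c x = c y -> ~~ e x y.
Proof. by move=> pc xX yX cxy; apply/negP => /(pc x y xX yX); rewrite cxy eqxx. Qed.

Lemma chi_le_proper (X : {set T}) k (c : T -> nat) :
  {in X, forall x, c x < k} -> proper_in X c -> chi e X <= k.
Proof.
move=> ck pc; rewrite /chi; case: ex_minnP => m _; apply.
apply/existsP; exists [ffun x => inord (c x) : 'I_k.+1].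
have cK x : x \in X -> (inord (c x) : 'I_k.+1) = c x :> nat.
  by move=> xX; rewrite inordK // ltnS ltnW ?ck.
apply/forallP => x; apply/implyP => xX; rewrite ffunE cK // ck //=.
apply/forallP => y; apply/implyP => yX; apply/implyP => /andP[_ exy].
by rewrite ffunE !cK //; apply: pc.
Qed.

Lemma chi_proper_coloring (X : {set T}) :
  exists2 c : T -> nat, {in X, forall x, c x < chi e X} & proper_in X c.
Proof.
rewrite /chi; case: ex_minnP => m /existsP[f /forallP pf] _.
exists (fun x => nat_of_ord (f x)) => [x xX|x y xX yX exy].
  by have /andP[] := implyP (pf x) xX.
have /andP[_ /forallP /(_ y)] := implyP (pf x) xX.
rewrite yX /= exy andbT => /implyP; apply.
by apply: contraTneq exy => ->; rewrite e_irr.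
Qed.

Lemma chi_le_card_colors (aT : finType) (X : {set T}) (c : T -> aT) :
  proper_in X c -> chi e X <= #|c @: X|.
Proof.
move=> pc; pose s := enum (c @: X).
have cs x : x \in X -> c x \in s by move=> xX; rewrite mem_enum imset_f.
apply: (@chi_le_proper _ _ (fun x => index (c x) s)) => [x xX|x y xX yX exy].
  by rewrite cardE index_mem cs.
apply: contraNneq (pc x y xX yX exy) => /(congr1 (nth (c x) s)).
by rewrite !nth_index ?cs // => ->.
Qed.

Lemma optimal_coloring (X : {set T}) :
  exists c : T -> 'I_(chi e X).+1, proper_in X c /\ #|c @: X| = chi e X.
Proof.
have [c0 c0lt pc0] := chi_proper_coloring X.
pose c x := inord (c0 x) : 'I_(chi e X).+1.
have cK x : x \in X -> c x = c0 x :> nat.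
  by move=> xX; rewrite inordK // ltnS ltnW ?c0lt.
have pc : proper_in X c.
  move=> x y xX yX exy; apply: contraNneq (pc0 x y xX yX exy).
  by rewrite -!cK // => ->.
exists c; split => //; apply/eqP; rewrite eqn_leq chi_le_card_colors // andbT.
apply: (@leq_trans #|[set~ (ord_max : 'I_(chi e X).+1)]|); last by rewrite cardsC1 card_ord.
apply/subset_leq_card/subsetP => _ /imsetP[x xX ->]; rewrite !inE.
by apply: contraTneq (c0lt x xX) => /(congr1 val); rewrite /= cK // => ->; rewrite ltnn.
Qed.

Lemma chi_set0 : chi e set0 = 0.
Proof.
by apply/eqP; rewrite -leqn0; apply: (@chi_le_proper _ _ (fun=> 0)) => [x|x y]; rewrite inE.
Qed.

Lemma chi_gt0 (X : {set T}) x : x \in X -> 0 < chi e X.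
Proof. by move=> xX; have [c /(_ x xX) + _] := chi_proper_coloring X; apply: leq_ltn_trans. Qed.

Lemma chi_subset (X Y : {set T}) : Y \subset X -> chi e Y <= chi e X.
Proof.
move=> /subsetP sYX; have [c clt pc] := chi_proper_coloring X.
apply: (@chi_le_proper _ _ c) => [x /sYX|x y /sYX xX /sYX yX]; [exact: clt|exact: pc].
Qed.

Lemma chi_setU (X Y : {set T}) : chi e (X :|: Y) <= chi e X + chi e Y.
Proof.
have [c1 lt1 p1] := chi_proper_coloring X; have [c2 lt2 p2] := chi_proper_coloring Y.
pose c x := if x \in X then c1 x else chi e X + c2 x.
have cX x : x \in X -> c x < chi e X by move=> xX; rewrite /c xX lt1.
have cY x : x \notin X -> x \in Y -> chi e X <= c x by rewrite /c => /negPf-> _; apply: leq_addr.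
apply: (@chi_le_proper _ _ c) => [x|x y].
  by rewrite inE /c; case: ifP => [xX _|_ xY]; [rewrite ltn_addr ?lt1 | rewrite ltn_add2l lt2].
rewrite !inE; have [xX|xX] := boolP (x \in X); have [yX|yX] := boolP (y \in X) => /= xY yY exy.
- by rewrite /c xX yX p1.
- by apply: contraTneq (cX x xX) => ->; rewrite -leqNgt cY.
- by apply: contraTneq (cX y yX) => <-; rewrite -leqNgt cY.
- by rewrite /c (negPf xX) (negPf yX) eqn_add2l p2.
Qed.

Lemma chi_stable (S : {set T}) : stable S -> chi e S <= 1.
Proof.
move=> /forallP sS; apply: (@chi_le_proper _ _ (fun=> 0)) => // x y xS yS.
by have /forallP/(_ y) := implyP (sS x) xS; rewrite yS => /negPf->.
Qed.

Lemma chi_setU_complete (A B : {set T}) :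
  complete A B -> chi e A + chi e B <= chi e (A :|: B).
Proof.
move=> cAB; have [c [pc <-]] := optimal_coloring (A :|: B).
have pcA : proper_in A c by move=> x y xA yA; apply: pc; rewrite inE ?xA ?yA.
have pcB : proper_in B c by move=> x y xB yB; apply: pc; rewrite inE ?xB ?yB ?orbT.
apply: leq_trans (leq_add (chi_le_card_colors pcA) (chi_le_card_colors pcB)) _.
rewrite imsetU cardsU -[X in X <= _]subn0 leq_sub2l // leqn0 cards_eq0.
apply/eqP/setP => i; rewrite !inE; apply/negP => /andP[/imsetP[a aA ->] /imsetP[b bB]].
by apply/eqP; apply: pc (cAB a b aA bB); rewrite inE ?aA ?bB ?orbT.
Qed.

End Colorings.

Section CliquesDegrees.
Variables (T : finType) (e : rel T).
Hypotheses (e_sym : symmetric e) (e_irr : irreflexive e).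

Definition omega_on (X : {set T}) := \max_(S | clique e S && (S \subset X)) #|S|.

Definition deg_on (X : {set T}) x := #|[set y in X | e x y]|.

Definition Delta_on (X : {set T}) := \max_(x in X) deg_on X x.

Lemma cliqueP (S : {set T}) :
  reflect {in S &, forall x y, x != y -> e x y} (clique e S).
Proof.
apply: (iffP forall_inP) => [cS x y xS yS|cS x xS].
  by have /forall_inP/(_ y yS)/implyP := cS x xS.
by apply/forall_inP => y yS; apply/implyP; apply: cS.
Qed.

Lemma stableP (S : {set T}) : reflect {in S &, forall x y, ~~ e x y} (stable e S).
Proof.
apply: (iffP forall_inP) => [sS x y xS yS|sS x xS].
  by have /forall_inP/(_ y yS) := sS x xS.
by apply/forall_inP => y yS; apply: sS.
Qed.

Lemma clique_card_le (S X : {set T}) :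
  clique e S -> S \subset X -> #|S| <= omega_on X.
Proof. by move=> cS sSX; apply: (leq_bigmax_cond S); rewrite cS. Qed.

Lemma omega_on_subset (X Y : {set T}) : X \subset Y -> omega_on X <= omega_on Y.
Proof.
move=> sXY; apply/bigmax_leqP => S /andP[cS sSX].
exact: clique_card_le cS (subset_trans sSX sXY).
Qed.

Lemma omega_on_attained (X : {set T}) :
  exists S, [/\ clique e S, S \subset X & omega_on X = #|S|].
Proof.
have P0 : clique e set0 && (set0 \subset X).
  by rewrite sub0set andbT; apply/cliqueP => x y; rewrite inE.
rewrite /omega_on (bigmax_eq_arg set0 P0).
by case: arg_maxnP => // S /andP[cS sSX] _; exists S.
Qed.

Lemma deg_le_Delta_on (X : {set T}) x : x \in X -> deg_on X x <= Delta_on X.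
Proof. exact: leq_bigmax_cond. Qed.

Lemma Delta_on_attained (X : {set T}) x0 :
  x0 \in X -> exists2 x, x \in X & Delta_on X = deg_on X x.
Proof.
move=> x0X; rewrite /Delta_on (bigmax_eq_arg x0 x0X).
by case: arg_maxnP => // x xX _; exists x.
Qed.

Lemma maximal_stable_superset (X C : {set T}) : C \subset X -> stable e C ->
  exists I : {set T}, [/\ C \subset I, I \subset X, stable e I &
    {in X :\: I, forall y, exists2 z, z \in I & e y z}].
Proof.
move=> sCX sC; pose P := [pred I : {set T} | (I \subset X) && stable e I].
have [I /maxsetP[/andP[sIX sI] maxI] sCI] := @maxset_exists _ P C (introT andP (conj sCX sC)).
exists I; split=> // y /setDP[yX yI]; apply/exists_inP; apply: contraR yI.
move=> /exists_inPn noz; have <- : y |: I = I.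
  apply: maxI; last exact: subsetUr.
  rewrite /P inE subUset sub1set yX sIX /=; apply/stableP => a b.
  have ab_I : a \in I -> b \in I -> ~~ e a b by move/stableP: sI; apply.
  rewrite !inE => /predU1P[-> | aI] /predU1P[-> | bI]; rewrite ?e_irr ?noz //.
  - by rewrite e_sym noz.
  - exact: ab_I.
exact: setU11.
Qed.

Lemma Delta_on_setD_dominated (X I : {set T}) : I \subset X ->
  {in X :\: I, forall y, exists2 z, z \in I & e y z} -> X :\: I != set0 ->
  Delta_on (X :\: I) < Delta_on X.
Proof.
move=> sIX domI /set0Pn[x0 x0XI]; have [x xXI ->] := Delta_on_attained x0XI.
have [xX _] : x \in X /\ _ := setDP xXI.
apply: leq_trans (deg_le_Delta_on xX); apply: proper_card; apply/properP; split.
  by apply/subsetP => y; rewrite !inE -andbA => /andP[_ ->].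
have [z zI exz] := domI x xXI.
by exists z; rewrite !inE ?zI ?(subsetP sIX) ?exz.
Qed.

Lemma chi_remove_maximal_stable (X C : {set T}) :
  X != set0 -> C \subset X -> stable e C ->
  exists I : {set T}, [/\ C \subset I, I \subset X, I != set0,
    chi e X <= chi e (X :\: I) + 1 &
    X :\: I = set0 \/ Delta_on (X :\: I) < Delta_on X].
Proof.
move=> /set0Pn[x xX] sCX sC; have [I [sCI sIX sI domI]] := maximal_stable_superset sCX sC.
exists I; split=> //.
- apply/set0Pn; have [xI|xI] := boolP (x \in I); first by exists x.
  by have [z zI _] := domI x (introT setDP (conj xX xI)); exists z.
- rewrite -{1}(setID X I) (setIidPr sIX) setUC.
  by apply: (leq_trans (chi_setU e_irr _ _)); rewrite leq_add2l chi_stable.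
- have [->|nXI] := eqVneq (X :\: I) set0; [by left | right].
  exact: Delta_on_setD_dominated.
Qed.

Lemma complete_sym (A B : {set T}) : complete e A B -> complete e B A.
Proof. by move=> cAB b a bB aA; rewrite e_sym cAB. Qed.

Lemma complete_disjoint (A B : {set T}) : complete e A B -> A :&: B = set0.
Proof.
move=> cAB; apply/setP => x; rewrite in_setI in_set0.
by apply/negP => /andP[xA xB]; have := cAB x x xA xB; rewrite e_irr.
Qed.

Lemma card_setU_complete (A B : {set T}) :
  complete e A B -> #|A :|: B| = #|A| + #|B|.
Proof. by move=> /complete_disjoint AB; rewrite cardsU AB cards0 subn0. Qed.

End CliquesDegrees.

Section StabilityTwo.
Variables (T : finType) (e : rel T).
Hypotheses (e_sym : symmetric e) (e_irr : irreflexive e).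

Definition nonnbrs (X : {set T}) v := [set y in X | (y != v) && ~~ e v y].

Definition stability_le2 (X : {set T}) :=
  forall S : {set T}, S \subset X -> stable e S -> #|S| <= 2.

Lemma nonnbrs_subset (X : {set T}) v : nonnbrs X v \subset X.
Proof. by apply/subsetP => y; rewrite inE => /andP[]. Qed.

Lemma card_le_nonnbrs (X : {set T}) v :
  v \in X -> #|X| <= (Delta_on e X).+1 + #|nonnbrs X v|.
Proof.
move=> vX; have cover : X \subset [set v] :|: [set y in X | e v y] :|: nonnbrs X v.
  by apply/subsetP => y yX; rewrite !inE yX; case: eqP; case: (e v y).
apply: leq_trans (subset_leq_card cover) _.
apply: leq_trans (leq_card_setU _ _) _; rewrite leq_add2r.
apply: leq_trans (leq_card_setU _ _) _; rewrite cards1 add1n ltnS.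
exact: deg_le_Delta_on.
Qed.

Variable X : {set T}.
Hypothesis X_stab2 : stability_le2 X.

Lemma stable_triple_eq x y z : x \in X -> y \in X -> z \in X ->
  x != y -> x != z -> ~~ e x y -> ~~ e x z -> ~~ e y z -> y = z.
Proof.
move=> xX yX zX xy xz exy exz eyz.
have sub : (x |: (y |: [set z])) \subset X by rewrite !subUset !sub1set xX yX zX.
have st : stable e (x |: (y |: [set z])).
  apply/stableP => a b; rewrite !inE.
  by move=> /or3P[]/eqP-> /or3P[]/eqP->; rewrite ?e_irr // e_sym.
apply/eqP; apply: contraTT (X_stab2 sub st) => yz.
by rewrite -ltnNge !cardsU1 !inE cards1 negb_or xy xz yz.
Qed.

Lemma nonnbrs_clique v : v \in X -> clique e (nonnbrs X v).
Proof.
move=> vX; apply/cliqueP => y z; rewrite !inE => /and3P[yX yv evy] /and3P[zX zv evz].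
apply: contraNT => eyz; apply/eqP.
by apply: (stable_triple_eq vX yX zX); rewrite 1?eq_sym.
Qed.

Section OptimalColoring.
Variables (aT : finType) (c : T -> aT).
Hypotheses (c_proper : proper_in e X c) (c_optimal : #|c @: X| = chi e X).

(* Recoloring [D] by [f] would give a proper coloring of [X] missing the color
   [i]; this is the only use of the optimality of [c]. *)
Lemma recoloring_absurd (D : {set T}) (f : T -> aT) i :
  {in D, forall x, f x \in c @: X} ->
  {in D &, forall x y, e x y -> f x != f y} ->
  (forall x y, x \in D -> y \in X :\: D -> e x y -> f x != c y) ->
  i \in c @: X -> {in X, forall y, c y = i -> y \in D} -> {in D, forall x, f x != i} ->
  False.
Proof.
move=> fX fD fXD iX iD fi; pose c' x := if x \in D then f x else c x.
have c'_proper : proper_in e X c'.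
  move=> x y xX yX; rewrite /c'.
  case: ifP => xD; case: ifP => yD exy; first exact: fD.
  - by apply: fXD; rewrite // inE yD.
  - by rewrite eq_sym; apply: fXD; rewrite // ?inE ?xD // e_sym.
  - exact: c_proper.
have c'X : c' @: X \subset (c @: X) :\ i.
  apply/subsetP => _ /imsetP[x xX ->]; rewrite !inE /c'.
  case: ifP => xD; first by rewrite fi ?fX.
  by rewrite imset_f // andbT; apply: contraFneq xD => /(iD x xX).
have := leq_trans (chi_le_card_colors c'_proper) (subset_leq_card c'X).
by rewrite -c_optimal [in X in X <= _](cardsD1 i) iX add1n ltnn.
Qed.

Definition singletons := [set x in X | [forall y in X, (c y == c x) ==> (y == x)]].

Definition partner x := odflt x [pick y in X | (c y == c x) && (y != x)].

Lemma singletons_subset : singletons \subset X.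
Proof. by apply/subsetP => x; rewrite inE => /andP[]. Qed.

Lemma singleton_eq u y : u \in singletons -> y \in X -> c y = c u -> y = u.
Proof.
rewrite inE => /andP[_ /forall_inP uU] yX cyu.
by apply/eqP; have /implyP := uU y yX; apply; rewrite cyu.
Qed.

Lemma singleton_color_neq w y :
  w \in singletons -> y \in X -> y != w -> c y != c w.
Proof. by move=> wU yX; apply: contraNneq => /(singleton_eq wU yX)->. Qed.

Lemma partnerP x :
  x \in X :\: singletons -> [/\ partner x \in X, c (partner x) = c x & partner x != x].
Proof.
rewrite /partner; case: pickP => [y /andP[yX /andP[/eqP -> ->]] //|none].
rewrite !inE => /andP[/negP xU xX]; exfalso; apply: xU; rewrite xX /=.
apply/forall_inP => y yX; apply/implyP => cyx; apply: contraFT (none y) => yx.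
by rewrite yX cyx.
Qed.

Lemma color_class x y : x \in X :\: singletons -> y \in X -> c y = c x ->
  y = x \/ y = partner x.
Proof.
move=> xW yX cyx; have [pX cpx px] := partnerP xW; have [xX _] := setDP xW.
have [->|yx] := eqVneq y x; [by left | right].
apply: (stable_triple_eq xX yX pX); rewrite 1?eq_sym //;
  by apply: proper_in_nonadj c_proper _ _ _; rewrite ?cyx ?cpx.
Qed.

Lemma partner_notin_singletons x :
  x \in X :\: singletons -> partner x \in X :\: singletons.
Proof.
move=> xW; have [pX cpx px] := partnerP xW; rewrite inE pX andbT.
by apply: contraNN px => pU; apply/eqP/esym/(singleton_eq pU); rewrite // (setDP xW).1.
Qed.

Lemma chi_double_le : 2 * chi e X <= #|X| + #|singletons|.
Proof.
pose W := X :\: singletons.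
have cardX : #|X| = #|singletons| + #|W|.
  by rewrite cardsDS ?singletons_subset // subnKC // subset_leq_card // singletons_subset.
have chiX : chi e X <= #|singletons| + #|c @: W|.
  rewrite -c_optimal -{1}(setID X singletons) (setIidPr singletons_subset) imsetU.
  exact: leq_trans (leq_card_setU _ _) (leq_add (leq_imset_card _ _) (leqnn _)).
have classes : 2 * #|c @: W| <= #|W|.
  rewrite -[#|W|]sum1_card (partition_big_imset c) /= mulnC -sum_nat_const.
  apply: leq_sum => _ /imsetP[x xW ->]; rewrite sum1_card.
  have [pX cpx px] := partnerP xW.
  have -> : 2 = #|[set x; partner x]| by rewrite cards2 eq_sym px.
  apply/subset_leq_card/subsetP => y.
  by rewrite !inE => /orP[]/eqP->; rewrite unfold_in /= ?xW ?cpx ?partner_notin_singletons ?eqxx.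
lia.
Qed.

Lemma singletons_clique : clique e singletons.
Proof.
apply/cliqueP => u v uU vU uv; apply/negPn/negP => euv.
have [uX vX] := (subsetP singletons_subset u uU, subsetP singletons_subset v vU).
have vu : c v != c u by apply: contraNneq uv => /(singleton_eq uU vX)->.
apply: (@recoloring_absurd [set v] (fun=> c u) (c v)).
- by move=> x _; rewrite imset_f.
- by move=> x y; rewrite !inE => /eqP-> /eqP->; rewrite e_irr.
- move=> x y; rewrite inE => /eqP-> /setDP[yX _] evy.
  by apply: contraTneq evy => /esym/(singleton_eq uU yX)->; rewrite e_sym.
- by rewrite imset_f.
- by move=> y yX /(singleton_eq vU yX)->; rewrite inE.
- by move=> x _; rewrite eq_sym.
Qed.

Section NonNeighbors.
Variable u : T.
Hypothesis uU : u \in singletons.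

Let uX : u \in X := subsetP singletons_subset u uU.

Lemma nonnbrs_notin_singletons s : s \in nonnbrs X u -> s \in X :\: singletons.
Proof.
rewrite inE => /and3P[sX su eus]; rewrite inE sX andbT.
by apply: contraNN eus => sU; have /cliqueP-> := singletons_clique; rewrite // eq_sym.
Qed.

Lemma nonnbrs_color_inj : {in nonnbrs X u &, injective c}.
Proof.
move=> s t; rewrite !inE => /and3P[sX su eus] /and3P[tX tu eut] cst.
apply: (stable_triple_eq uX sX tX); rewrite 1?eq_sym //.
exact: proper_in_nonadj c_proper _ _ cst.
Qed.

Lemma partner_adj_singleton s v :
  s \in nonnbrs X u -> v \in singletons -> e (partner s) v.
Proof.
move=> sS vU; have sW := nonnbrs_notin_singletons sS.
have [pX cps ps] := partnerP sW; have [_ pU] := setDP (partner_notin_singletons sW).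
have /and3P[sX su eus] : [&& s \in X, s != u & ~~ e u s] by move: sS; rewrite inE.
have vX := subsetP singletons_subset v vU.
have esp := proper_in_nonadj c_proper sX pX (esym cps).
apply/negPn/negP => epv; have [vu | vu] := eqVneq v u.
  move/eqP: ps; apply; apply/esym/(stable_triple_eq uX sX pX); rewrite 1?eq_sym //.
  - by apply/eqP => pu; move: pU; rewrite pu uU.
  - by rewrite e_sym -vu.
have csu := singleton_color_neq uU sX su.
have csv : c s != c v by rewrite singleton_color_neq // eq_sym (memPn (setDP sW).2).
apply: (@recoloring_absurd [set s; partner s] (fun x => if x == s then c u else c v) (c s)).
- by move=> x _; case: ifP; rewrite imset_f.
- move=> x y; rewrite !inE => /orP[]/eqP-> /orP[]/eqP->; rewrite ?e_irr // ?(negPf esp) //.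
  by rewrite e_sym (negPf esp).
- move=> x y; rewrite !inE => /orP[]/eqP-> /andP[/norP[ys yp] yX].
    by rewrite eqxx; apply: contraTneq => /esym/(singleton_eq uU yX)->; rewrite e_sym.
  by rewrite (negPf ps); apply: contraTneq => /esym/(singleton_eq vU yX)->.
- by rewrite imset_f.
- by move=> y yX /(color_class sW yX) [] ->; rewrite !inE eqxx ?orbT.
- by move=> x; rewrite !inE => /orP[]/eqP->; rewrite ?eqxx ?(negPf ps) eq_sym.
Qed.

Lemma partners_adj s t v : s \in nonnbrs X u -> t \in nonnbrs X u -> s != t ->
  v \in singletons -> v != u -> ~~ e s v -> e (partner s) (partner t).
Proof.
move=> sS tS st vU vu esv.
have [sW tW] := (nonnbrs_notin_singletons sS, nonnbrs_notin_singletons tS).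
have [_ cps ps] := partnerP sW.
have /and3P[sX su eus] : [&& s \in X, s != u & ~~ e u s] by move: sS; rewrite inE.
have /and3P[tX tu eut] : [&& t \in X, t != u & ~~ e u t] by move: tS; rewrite inE.
have vX := subsetP singletons_subset v vU.
have cvu := singleton_color_neq uU vX vu.
have [csu ctu] := (singleton_color_neq uU sX su, singleton_color_neq uU tX tu).
have csv : c s != c v by rewrite singleton_color_neq // eq_sym (memPn (setDP sW).2).
have ctv : c t != c v by rewrite singleton_color_neq // eq_sym (memPn (setDP tW).2).
have cts : c t != c s by apply: contraNneq st => /(nonnbrs_color_inj tS sS)->.
have pt' : partner s != t by apply: contraTneq cts => <-; rewrite cps eqxx.
apply/negPn/negP => ept.
pose f x := if x == s then c v else if x == partner s then c t else c u.
have [fs fp ft] : [/\ f s = c v, f (partner s) = c t & f t = c u].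
  by rewrite /f eqxx (negPf ps) eqxx eq_sym (negPf st) eq_sym (negPf pt').
apply: (@recoloring_absurd (s |: (partner s |: [set t])) f (c s)).
- by move=> x _; rewrite /f; do 2?case: ifP => _; rewrite imset_f.
- move=> x y; rewrite !inE => /or3P[]/eqP-> /or3P[]/eqP->; rewrite ?e_irr // => _;
    by rewrite ?fs ?fp ?ft // eq_sym.
- move=> x y; rewrite !inE !negb_or => /or3P[]/eqP-> /andP[/and3P[ys yp yt] yX] exy.
  + by rewrite fs; apply: contraNneq esv => /esym/(singleton_eq vU yX) <-.
  + rewrite fp; apply: contraNneq ept => /esym/(color_class tW yX)[ytE|<-] //.
    by rewrite ytE eqxx in yt.
  + by rewrite ft; apply: contraNneq eut => /esym/(singleton_eq uU yX) <-; rewrite e_sym.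
- by rewrite imset_f.
- by move=> y yX /(color_class sW yX) [] ->; rewrite !inE eqxx ?orbT.
- by move=> x; rewrite !inE => /or3P[]/eqP->; rewrite ?fs ?fp ?ft // eq_sym.
Qed.

Definition loose := [set s in nonnbrs X u | [exists v in singletons, (v != u) && ~~ e s v]].

Lemma card_singletons_partners (Z : {set T}) : Z \subset nonnbrs X u ->
  {in Z &, forall s t, s != t -> (s \in loose) || (t \in loose)} ->
  #|singletons| + #|Z| <= omega_on e X.
Proof.
move=> /subsetP ZS Zloose.
have pW s : s \in Z -> partner s \in X :\: singletons.
  by move=> sZ; apply/partner_notin_singletons/nonnbrs_notin_singletons/ZS.
have pinj : {in Z &, injective partner}.
  move=> s t sZ tZ pst; apply: nonnbrs_color_inj; rewrite ?ZS //.
  have [[_ cps _] [_ cpt _]] := (partnerP (nonnbrs_notin_singletons (ZS s sZ)),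
                                partnerP (nonnbrs_notin_singletons (ZS t tZ))).
  by rewrite -cps -cpt pst.
have disj : singletons :&: partner @: Z = set0.
  apply/setP => x; rewrite in_setI in_set0; apply/negP => /andP[xU /imsetP[s sZ xp]].
  by have /setDP[_] := pW s sZ; rewrite -xp xU.
rewrite -(card_in_imset pinj) -[_ + _]subn0 -(cards0 T) -disj -cardsU.
apply: clique_card_le; last first.
  by rewrite subUset singletons_subset; apply/subsetP => _ /imsetP[s /pW /setDP[]] ? _ ->.
have /cliqueP clU := singletons_clique.
apply/cliqueP => x y; rewrite !in_setU => /orP[xU|/imsetP[s sZ ->]] /orP[yU|/imsetP[t tZ ->]] xy.
- exact: clU xU yU xy.
- by rewrite e_sym partner_adj_singleton ?ZS.
- by rewrite partner_adj_singleton ?ZS.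
have st : s != t by apply: contraNneq xy => ->.
have /orP[] := Zloose s t sZ tZ st; rewrite inE => /andP[_ /exists_inP[v vU /andP[vu nadj]]].
  exact: (partners_adj (ZS s sZ) (ZS t tZ) st vU vu).
by rewrite e_sym; apply: (partners_adj (ZS t tZ) (ZS s sZ) _ vU vu); rewrite 1?eq_sym.
Qed.

Lemma card_singletons_tight :
  #|singletons| + #|nonnbrs X u :\: loose| <= (omega_on e X).+1.
Proof.
set tight := nonnbrs X u :\: loose.
have tS : tight \subset nonnbrs X u := subsetDl _ _.
have disj : (singletons :\ u) :&: tight = set0.
  apply/setP => x; rewrite in_setI in_set0; apply/negP => /andP[/setD1P[_ xU]].
  by move=> /(subsetP tS)/nonnbrs_notin_singletons/setDP[_]; rewrite xU.
rewrite (cardsD1 u) uU add1n addSn ltnS -[_ + _]subn0 -(cards0 T) -disj -cardsU.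
apply: clique_card_le; last first.
  rewrite subUset (subset_trans (subD1set _ _) singletons_subset) /=.
  exact: subset_trans tS (nonnbrs_subset _ _).
have /cliqueP clU := singletons_clique; have /cliqueP clS := nonnbrs_clique uX.
have adj x y : x \in singletons :\ u -> y \in tight -> e y x.
  move=> /setD1P[xu xU] /setDP[yS]; rewrite in_set yS => /exists_inPn /(_ x xU).
  by rewrite xu negbK.
apply/cliqueP => x y; rewrite !in_setU.
move=> /orP[xU|xt] /orP[yU|yt] xy.
- by apply: clU; rewrite ?(setD1P xU).2 ?(setD1P yU).2.
- by rewrite e_sym adj.
- exact: adj.
- by apply: clS; rewrite ?(subsetP tS).
Qed.

Lemma singletons_nonnbrs_le : 2 * #|singletons| + #|nonnbrs X u| <= 2 * omega_on e X.
Proof.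
have lS : loose \subset nonnbrs X u by apply/subsetP => s; rewrite inE => /andP[].
have cardS : #|nonnbrs X u| = #|loose| + #|nonnbrs X u :\: loose|.
  by rewrite cardsD (setIidPr lS) subnKC // subset_leq_card.
have tight := card_singletons_tight.
have [tight0|[s0 s0t]] := set_0Vmem (nonnbrs X u :\: loose).
  have := card_singletons_partners lS (fun s t sl _ _ => introT orP (or_introl sl)).
  have := clique_card_le singletons_clique singletons_subset.
  rewrite tight0 cards0 in cardS; lia.
have [s0S s0l] : s0 \in nonnbrs X u /\ s0 \notin loose by apply/setDP.
have Z_loose : {in s0 |: loose &, forall s t, s != t -> (s \in loose) || (t \in loose)}.
  by move=> s t; rewrite !inE => /predU1P[-> | ->] // /predU1P[-> | ->]; rewrite ?eqxx ?orbT.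
have := card_singletons_partners _ Z_loose; rewrite subUset sub1set s0S lS cardsU1 s0l.
move=> /(_ isT); lia.
Qed.

End NonNeighbors.

End OptimalColoring.

Lemma four_chi_le_stability_le2 : X != set0 ->
  4 * chi e X <= 2 * omega_on e X + #|X| + Delta_on e X + 1.
Proof.
move=> /set0Pn[x0 x0X]; have [c [pc opt]] := optimal_coloring e_irr X.
have := chi_double_le opt.
have [U0|[u uU]] := set_0Vmem (singletons c).
  have := card_le_nonnbrs x0X.
  have := clique_card_le (nonnbrs_clique x0X) (nonnbrs_subset _ _).
  rewrite U0 cards0; lia.
have := singletons_nonnbrs_le pc opt uU.
have := card_le_nonnbrs (subsetP (singletons_subset c) u uU); lia.
Qed.

End StabilityTwo.

Section Bound.
Variables (T : finType) (e : rel T).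
Hypotheses (e_sym : symmetric e) (e_irr : irreflexive e).

Lemma four_chi_le_of_removal (X H I : {set T}) :
  H \subset X -> I \subset X -> chi e X <= chi e (X :\: I) + 1 ->
  X :\: I = set0 \/ Delta_on e (X :\: I) < Delta_on e X ->
  3 + 3 * chi e (H :\: I) + #|H :&: I| <= #|I| + 3 * chi e H ->
  4 * chi e (X :\: I) + #|H :\: I| <=
    2 * omega_on e (X :\: I) + #|X :\: I| + Delta_on e (X :\: I) + 1 + 3 * chi e (H :\: I) ->
  4 * chi e X + #|H| <= 2 * omega_on e X + #|X| + Delta_on e X + 1 + 3 * chi e H.
Proof.
move=> sHX sIX chiX dec gain IH.
have cardX : #|X| = #|X :\: I| + #|I| by rewrite cardsDS // subnK // subset_leq_card.
have cardH : #|H| = #|H :\: I| + #|H :&: I| by rewrite addnC cardsID.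
have omX : omega_on e (X :\: I) <= omega_on e X by apply/omega_on_subset/subsetDl.
case: dec => [XI0 | dec]; last by lia.
have HI0 : H :\: I = set0 by apply/eqP; rewrite -subset0 -XI0 setSD.
move: chiX IH; rewrite XI0 HI0 chi_set0 cards0 in cardX cardH *; lia.
Qed.

Lemma four_chi_le (X H : {set T}) : H \subset X ->
  4 * chi e X + #|H| <= 2 * omega_on e X + #|X| + Delta_on e X + 1 + 3 * chi e H.
Proof.
have [n] := ubnP #|X|; elim: n => // n IH in X H *; rewrite ltnS => leXn sHX.
have [X0|nX] := eqVneq X set0.
  by move: sHX; rewrite X0 subset0 => /eqP->; rewrite chi_set0 cards0.
have removal (C : {set T}) : C \subset X -> stable e C ->
    (forall I : {set T}, C \subset I ->
       3 + 3 * chi e (H :\: I) + #|H :&: I| <= #|I| + 3 * chi e H) ->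
    4 * chi e X + #|H| <= 2 * omega_on e X + #|X| + Delta_on e X + 1 + 3 * chi e H.
  move=> sCX sC gain.
  have [I [sCI sIX nI chiX dec]] := chi_remove_maximal_stable e_sym e_irr nX sCX sC.
  apply: four_chi_le_of_removal dec (gain I sCI) (IH _ _ _ (setSD _ sHX)) => //.
  by rewrite (leq_trans _ leXn) // cardsDS // ltn_subrL !card_gt0 nI nX.
have [H0|[h0 h0H]] := set_0Vmem H; last first.
  have [c clt pc] := chi_proper_coloring e_irr H.
  pose C := [set x in H | c x == (chi e H).-1].
  have sCH : C \subset H by apply/subsetP => x; rewrite inE => /andP[].
  apply: (removal C) => [|| I sCI]; first exact: subset_trans sCH sHX.
    apply/stableP => x y; rewrite !inE => /andP[xH /eqP cx] /andP[yH /eqP cy].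
    by apply: proper_in_nonadj pc xH yH _; rewrite cx cy.
  have chiHC : chi e (H :\: C) <= (chi e H).-1.
    apply: (@chi_le_proper _ _ _ _ c) => [x|x y /setDP[xH _] /setDP[yH _]]; last exact: pc.
    move=> /setDP[xH]; rewrite inE xH /= => cx; have := clt x xH; lia.
  have := chi_subset e_irr (setDS H sCI); have := chi_gt0 e_irr h0H.
  have := subset_leq_card (subsetIr H I); lia.
case: (boolP [exists C : {set T}, [&& C \subset X, stable e C & 2 < #|C|]]).
  move=> /existsP[C /and3P[sCX sC C3]]; apply: (removal C) => // I sCI.
  by rewrite H0 set0D set0I chi_set0 cards0; have := subset_leq_card sCI; lia.
move=> /existsPn noC.
have stab2 : stability_le2 e X.
  by move=> S sSX sS; have := noC S; rewrite sSX sS /= -leqNgt.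
rewrite H0 chi_set0 cards0.
by have := four_chi_le_stability_le2 e_sym e_irr stab2 nX; lia.
Qed.

End Bound.

Section CutSet.
Variables (T : finType) (e : rel T).
Hypotheses (e_sym : symmetric e) (e_irr : irreflexive e).

Lemma compl_cutset_split (K : {set T}) : compl_cutset e K ->
  exists (A B : {set T}) a b, [/\ a \in A, b \in B, A :|: B = ~: K & complete e A B].
Proof.
case=> [u [v [uK vK nuv]]]; set r := (X in connect X) in nuv.
exists [set x | (x \notin K) && connect r u x], [set x | (x \notin K) && ~~ connect r u x], u, v.
split; rewrite ?inE ?uK ?vK ?connect0 //.
  by apply/setP => x; rewrite !inE; case: (x \in K); case: connect.
move=> a b; rewrite !inE => /andP[aK ua] /andP[bK /negP nub]; apply/negPn/negP => nab.
apply/nub/(connect_trans ua (connect1 _)); rewrite /r /= aK bK /compl_rel nab andbT.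
by apply/eqP => ab; apply: nub; rewrite -ab.
Qed.

Lemma omega_on_complete (A B : {set T}) :
  complete e A B -> omega_on e A + omega_on e B <= omega e.
Proof.
move=> cAB; have [SA [cA sA ->]] := omega_on_attained e A.
have [SB [cB sB ->]] := omega_on_attained e B.
have cS : complete e SA SB.
  by move=> x y xS yS; apply: cAB; [apply: (subsetP sA) | apply: (subsetP sB)].
rewrite -(card_setU_complete e_irr cS); apply: leq_bigmax_cond.
have [/cliqueP clA /cliqueP clB] := (cA, cB).
apply/cliqueP => x y; rewrite !in_setU => /orP[xS|xS] /orP[yS|yS] xy.
- exact: clA.
- exact: cS.
- by rewrite e_sym cS.
- exact: clB.
Qed.

Lemma Delta_on_complete (A B : {set T}) a :
  a \in A -> complete e A B -> #|B| + Delta_on e A <= Delta e.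
Proof.
move=> aA cAB; have [x xA ->] := Delta_on_attained e aA.
have cxB : complete e [set y in A | e x y] B by move=> y z; rewrite inE => /andP[yA _]; apply: cAB.
rewrite addnC -(card_setU_complete e_irr cxB); apply: leq_trans (leq_bigmax x).
apply/subset_leq_card/subsetP => y; rewrite !inE => /orP[/andP[_ //]|]; exact: cAB.
Qed.

Lemma four_chi_le_cutset (K H : {set T}) : compl_cutset e K ->
  4 * chi e setT + #|H :\: K| <=
    2 * omega e + 2 * Delta e + 2 + 4 * chi e K + 3 * chi e (H :\: K).
Proof.
move=> /compl_cutset_split[A [B [a [b [aA bB AB cAB]]]]].
have chiT : chi e setT <= chi e K + (chi e A + chi e B).
  rewrite -(setUCr K) -AB; apply: leq_trans (chi_setU e_irr _ _) _.
  by rewrite leq_add2l chi_setU.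
have cHAB : complete e (H :&: A) (H :&: B).
  by move=> x y /setIP[_ xA] /setIP[_ yB]; apply: cAB.
have HK : H :\: K = (H :&: A) :|: (H :&: B) by rewrite setDE -AB setIUr.
have := chi_setU_complete e_irr cHAB; rewrite -HK => chiH.
have := card_setU_complete e_irr cHAB; rewrite -HK => cardH.
have := four_chi_le e_sym e_irr (subsetIr H A).
have := four_chi_le e_sym e_irr (subsetIr H B).
have := omega_on_complete cAB.
have := Delta_on_complete aA cAB; have := Delta_on_complete bB (complete_sym e_sym cAB).
lia.
Qed.

End CutSet.

Unset Implicit Arguments.
Import GRing.Theory Num.Theory.
Local Open Scope ring_scope.

Theorem proposition4 (T : finType) (e : rel T) (K H : {set T}) :
  simple_graph e ->
  compl_cutset e K ->
  H != set0 ->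
  ((chi e setT)%:R : rat) <=
    (1 / 2) * ((omega e)%:R + (Delta e)%:R + 1)
    + (4 * (chi e K)%:R + 3 * (chi e (H :\: K))%:R - (#|H :\: K|)%:R) / 4.
Proof.
move=> [e_sym e_irr _] cut _.
have := four_chi_le_cutset e_sym e_irr H cut; rewrite -(ler_nat rat) !natrD.
lra.
Qed.
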